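(* Let $H$ be a real Hilbert space, $A:H\to2^H$ maximal monotone with $\mathrm{zer}A\ne\emptyset$, $(\gamma_n)$ a sequence in $(0,\infty)$ with $\sum_n\gamma_n^2=\infty$ and rate of divergence $\theta$, $x_0\in H$, $x_{n+1}=J_{\gamma_nA}x_n$, and $b>0$ with $b\ge\|x_0-p\|$ for some $p\in\mathrm{zer}A$. For $k\in\mathbb{N}$ let $m_k=\max_{0\le i\le k}\gamma_i$ and $M_k=\lceil(k+1)(2+m_k)\rceil-1$. Then for every $k\in\mathbb{N}$ there exists $N\le\Phi(k,m_k,\theta,b):=\theta\big(\lceil b^2(M_k+1)^2\rceil\big)\lceil b^2(M_k+1)^2\rceil-1$ such that $\|x_N-J_{\gamma_iA}x_N\|\le\frac1{k+1}$ for all $i\le k$ (i.e. $x_N\in AF_k$).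
   Context: $J_{\gamma A}:=(Id+\gamma A)^{-1}$ is the resolvent of $\gamma A$. $AF_k:=\bigcap_{i\le k}\{x\in H\mid\|x-J_{\gamma_iA}x\|\le\frac1{k+1}\}$. A rate of divergence for $\sum\gamma_n^2$ is $\theta:\mathbb{N}\to\mathbb{N}$ with $\sum_{i=0}^{\theta(n)}\gamma_i^2\ge n$ for all $n$. *)

From HB Require Import structures.
From mathcomp Require Import all_boot all_order all_algebra.
From mathcomp Require Import all_classical all_reals all_analysis.
Set Implicit Arguments. Unset Strict Implicit. Unset Printing Implicit Defensive.
Import Order.TTheory GRing.Theory Num.Theory.
Import numFieldNormedType.Exports.
Local Open Scope classical_set_scope.
Local Open Scope ring_scope.

(* ip is a (real) inner product on V inducing the norm of V.
   A real Hilbert space is a complete normed space V with such an ip. *)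
Definition is_inner_product (R : realType) (V : normedModType R)
  (ip : V -> V -> R) : Prop :=
  [/\ (forall x y, ip x y = ip y x),
      (forall (a : R) (x y z : V), ip (a *: x + y) z = a * ip x z + ip y z)
    & (forall x, ip x x = `|x| ^+ 2)].

(* Set-valued operators A : H -> 2^H; u \in A x is written A x u. *)
Definition monotone_op (R : realType) (V : normedModType R)
  (ip : V -> V -> R) (A : V -> set V) : Prop :=
  forall x y u v, A x u -> A y v -> 0 <= ip (x - y) (u - v).

Definition maximal_monotone (R : realType) (V : normedModType R)
  (ip : V -> V -> R) (A : V -> set V) : Prop :=
  monotone_op ip A /\
  forall B : V -> set V, monotone_op ip B ->
    (forall x u, A x u -> B x u) -> forall x u, B x u -> A x u.

Definition zer (R : realType) (V : normedModType R) (A : V -> set V) : set V :=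
  [set p | A p 0].

(* resolvent J_{g A} x = (Id + g A)^{-1} x : the (for maximal monotone A and
   g > 0, unique) y with x \in y + g A y, chosen by classical choice. *)
Definition resolvent (R : realType) (V : normedModType R)
  (A : V -> set V) (g : R) (x : V) : V :=
  xget x [set y | exists2 u, A y u & x = y + g *: u].

Definition AF (R : realType) (V : normedModType R)
  (A : V -> set V) (gamma : nat -> R) (k : nat) : set V :=
  [set x | forall i, (i <= k)%N ->
     `|x - resolvent A (gamma i) x| <= (k.+1%:R)^-1].

Definition rate_of_divergence (R : realType) (gamma : nat -> R)
  (theta : nat -> nat) : Prop :=
  forall n : nat, n%:R <= \sum_(0 <= i < (theta n).+1) gamma i ^+ 2.

Definition ceiln (R : realType) (r : R) : nat := `|Num.ceil r|%N.

Definition mk (R : realType) (gamma : nat -> R) (k : nat) : R :=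
  \big[Num.max/0]_(0 <= i < k.+1) gamma i.

Definition Mk (R : realType) (gamma : nat -> R) (k : nat) : nat :=
  (ceiln (k.+1%:R * (2 + mk gamma k)) - 1)%N.

(* Phi(k, m_k, theta, b) = theta(ceil(b^2 (M_k+1)^2)) * ceil(b^2 (M_k+1)^2) - 1
   (natural-number, truncated subtraction) *)
Definition Phi (R : realType) (gamma : nat -> R) (theta : nat -> nat)
  (b : R) (k : nat) : nat :=
  let c := ceiln (b ^+ 2 * ((Mk gamma k).+1%:R) ^+ 2) in
  (theta c * c - 1)%N.

From HB Require Import structures.
From mathcomp Require Import all_boot all_order all_algebra.
From mathcomp Require Import all_classical all_reals all_analysis.
From mathcomp Require Import ring lra zify.
Import Order.TTheory GRing.Theory Num.Theory.
Import numFieldNormedType.Exports.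
Local Open Scope classical_set_scope.
Local Open Scope ring_scope.
Set Implicit Arguments. Unset Strict Implicit.

(* Writing x_n = x_{n+1} + gamma_n u_n with u_n in A x_{n+1}, Fejer monotonicity
   towards a zero p gives sum_n gamma_n^2 |u_n|^2 <= |x_0 - p|^2, and monotonicity
   of A makes |u_n| nonincreasing, so |u_T|^2 sum_{n<=T} gamma_n^2 <= b^2.  Since
   |y - J_{gA} y| <= g |u| for every u in A y, at T = theta(ceil(b^2 (M_k+1)^2))
   the divergence rate yields |x_{T+1} - J_{gamma_i A} x_{T+1}| (M_k+1) <= gamma_i,
   hence x_{T+1} is in AF_k.
   That resolvents are defined everywhere is Minty's theorem; it is proved by
   minimising (x, u) |-> sup over the graph of fitz _ _ x u, a strongly convex
   Fitzpatrick-type function: its minimiser (xb, ub) has xb + ub = 0 and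
   (-ub, -xb) in the graph of A, and shifting and rescaling A handles J_{gA} z. *)

Section InnerProduct.
Variables (R : realType) (V : normedModType R) (ip : V -> V -> R).
Hypothesis ipP : is_inner_product ip.
Implicit Types x y z u v : V.

Lemma ipC x y : ip x y = ip y x. Proof. by case: ipP. Qed.

Lemma ip_norm x : ip x x = `|x| ^+ 2. Proof. by case: ipP. Qed.

Lemma ipDl x y z : ip (x + y) z = ip x z + ip y z.
Proof. by case: ipP => _ ipL _; rewrite -[x]scale1r ipL mul1r scale1r. Qed.

Lemma ip0l z : ip 0 z = 0.
Proof. by have := ipDl 0 0 z; rewrite addr0; lra. Qed.

Lemma ipZl a x z : ip (a *: x) z = a * ip x z.
Proof. by case: ipP => _ ipL _; rewrite -[a *: x]addr0 ipL ip0l addr0. Qed.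

Lemma ipNl x z : ip (- x) z = - ip x z.
Proof. by rewrite -scaleN1r ipZl mulN1r. Qed.

Lemma ipBl x y z : ip (x - y) z = ip x z - ip y z.
Proof. by rewrite ipDl ipNl. Qed.

Lemma ipDr x y z : ip z (x + y) = ip z x + ip z y.
Proof. by rewrite ipC ipDl !(ipC _ z). Qed.

Lemma ipZr a x z : ip z (a *: x) = a * ip z x.
Proof. by rewrite ipC ipZl ipC. Qed.

Lemma ipNr x z : ip z (- x) = - ip z x.
Proof. by rewrite ipC ipNl ipC. Qed.

Lemma ipBr x y z : ip z (x - y) = ip z x - ip z y.
Proof. by rewrite ipDr ipNr. Qed.

Lemma ipBB x y u v : ip (x - y) (u - v) = ip x u - ip x v - ip y u + ip y v.
Proof. by rewrite !ipBl !ipBr; ring. Qed.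

Lemma normD2 x y : `|x + y| ^+ 2 = `|x| ^+ 2 + 2 * ip x y + `|y| ^+ 2.
Proof. by rewrite -!ip_norm ipDl !ipDr (ipC y x); ring. Qed.

Lemma normB2 x y : `|x - y| ^+ 2 = `|x| ^+ 2 - 2 * ip x y + `|y| ^+ 2.
Proof. by rewrite -!ip_norm ipBl !ipBr (ipC y x); ring. Qed.

Lemma norm_convex2 (t : R) x y : `|(1 - t) *: x + t *: y| ^+ 2 =
  (1 - t) * `|x| ^+ 2 + t * `|y| ^+ 2 - t * (1 - t) * `|x - y| ^+ 2.
Proof. by rewrite -!ip_norm !ipDl !ipDr !ipZl !ipZr !ipNl !ipNr (ipC y x); ring. Qed.

Lemma ip_le_norm2 x y : 2 * ip x y <= `|x| ^+ 2 + `|y| ^+ 2.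
Proof. by have := normB2 x y; have := sqr_ge0 `|x - y|; lra. Qed.

End InnerProduct.

Lemma cvg_le_natSinv (R : realType) (a : nat -> R) (l m : R) :
  a @ \oo --> l -> (forall n, a n <= m + n.+1%:R^-1) -> l <= m.
Proof.
move=> al am; apply/ler_addgt0Pr => e e_gt0.
apply: (cvgr_to_le al); near=> n.
apply: (le_trans (am n)); rewrite lerD2l ltW //.
by near: n; apply: (@near_infty_natSinv_lt _ (PosNum e_gt0)).
Unshelve. all: by end_near.
Qed.

Lemma cvg_of_sqr_dist_le (R : realType) (H : completeNormedModType R)
    (g : nat -> H) (c : R) : 0 < c ->
  (forall n k, `|g n - g k| ^+ 2 <= c * (n.+1%:R^-1 + k.+1%:R^-1)) ->
  cvg (g @ \oo).
Proof.
move=> c_gt0 gc; apply/cauchy_cvgP/cauchyP => e e_gt0.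
have ec_gt0 : 0 < e ^+ 2 / (2 * c) by rewrite divr_gt0 ?exprn_gt0 ?mulr_gt0.
have [N _ NP] := near_infty_natSinv_lt (PosNum ec_gt0).
exists (g N), N => // n /= Nn; rewrite -ball_normE /=.
have /(_ N (leqnn N)) /= N_lt := NP.
have /= n_lt := NP n Nn.
rewrite -ltr_sqr ?nnegrE ?(ltW e_gt0) //.
apply: (le_lt_trans (gc N n)).
rewrite -ltr_pdivlMl //.
have -> : c^-1 * e ^+ 2 = e ^+ 2 / (2 * c) + e ^+ 2 / (2 * c).
  by field; rewrite gt_eqF.
exact: ltrD.
Qed.

Section Fitzpatrick.
Variables (R : realType) (H : completeNormedModType R) (ip : H -> H -> R).
Variable A : H -> set H.
Hypotheses (ipP : is_inner_product ip) (maxA : maximal_monotone ip A).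
Implicit Types (x y u v : H) (r : R).

(* fitz y v x u = <x, v> + <y, u> - <y, v> + |x|^2/2 + |u|^2/2 (fitzE); written
   with squared norms so that convexity and continuity in (x, u) are immediate. *)
Definition fitz y v x u : R := 2^-1 * `|x + v| ^+ 2 + 2^-1 * `|u + y| ^+ 2
  - 2^-1 * `|v| ^+ 2 - 2^-1 * `|y| ^+ 2 - ip y v.

Definition fitz_le x u r := forall y v, A y v -> fitz y v x u <= r.

Lemma fitzE y v x u : fitz y v x u =
  ip x v + ip y u - ip y v + 2^-1 * `|x| ^+ 2 + 2^-1 * `|u| ^+ 2.
Proof. by rewrite /fitz !(normD2 ipP) (ipC ipP u y); lra. Qed.

Lemma maximal_monotone_mem x u :
  (forall y v, A y v -> 0 <= ip (x - y) (u - v)) -> A x u.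
Proof.
move=> xu_mon; case: maxA => monA maxA'.
apply: (maxA' (fun y v => A y v \/ (y = x /\ v = u))); last by right.
- move=> y1 y2 v1 v2 [Ayv1|[-> ->]] [Ayv2|[-> ->]].
  + exact: monA.
  + by rewrite -(opprB x) -(opprB u) (ipNl ipP) (ipNr ipP) opprK; apply: xu_mon.
  + exact: xu_mon.
  + by rewrite !subrr (ip0l ipP).
- by move=> y v; left.
Qed.

Lemma fitz_le_ge x u r : fitz_le x u r ->
  ip x u + 2^-1 * `|x| ^+ 2 + 2^-1 * `|u| ^+ 2 <= r.
Proof.
move=> xur; rewrite leNgt; apply/negP => r_lt.
suff /xur : A x u by rewrite fitzE; lra.
apply: maximal_monotone_mem => y v Ayv; rewrite leNgt; apply/negP.
by have := xur y v Ayv; rewrite fitzE (ipBB ipP); lra.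
Qed.

Lemma fitz_le_ge0 x u r : fitz_le x u r -> 0 <= r.
Proof.
move=> /fitz_le_ge; have := normD2 ipP x u; have := sqr_ge0 `|x + u|; lra.
Qed.

Lemma fitz_le_trans x u r s : fitz_le x u r -> r <= s -> fitz_le x u s.
Proof. by move=> xur rs y v Ayv; apply: le_trans (xur y v Ayv) rs. Qed.

Lemma fitz_le_graph x u : A x u ->
  fitz_le x u (ip x u + 2^-1 * `|x| ^+ 2 + 2^-1 * `|u| ^+ 2).
Proof.
move=> Axu y v Ayv; have := proj1 maxA _ _ _ _ Axu Ayv.
by rewrite fitzE (ipBB ipP); lra.
Qed.

Lemma fitz_le_convex x1 u1 r1 x2 u2 r2 (t : R) : 0 <= t <= 1 ->
  fitz_le x1 u1 r1 -> fitz_le x2 u2 r2 ->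
  fitz_le ((1 - t) *: x1 + t *: x2) ((1 - t) *: u1 + t *: u2)
    ((1 - t) * r1 + t * r2
     - 2^-1 * (t * (1 - t)) * (`|x1 - x2| ^+ 2 + `|u1 - u2| ^+ 2)).
Proof.
move=> /andP[t_ge0 t_le1] xur1 xur2 y v Ayv.
have shift (w1 w2 w : H) :
    (1 - t) *: w1 + t *: w2 + w = (1 - t) *: (w1 + w) + t *: (w2 + w).
  by rewrite !scalerDr addrACA -scalerDl subrK scale1r.
have subD (w1 w2 w : H) : (w1 + w) - (w2 + w) = w1 - w2.
  by rewrite [w2 + w]addrC addrKA.
have := xur1 y v Ayv; have := xur2 y v Ayv.
rewrite /fitz !shift !(norm_convex2 ipP) !subD => le2 le1.
have t1_ge0 : 0 <= 1 - t by rewrite subr_ge0.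
have := ler_wpM2l t_ge0 le2; have := ler_wpM2l t1_ge0 le1.
by lra.
Qed.

Lemma fitz_le_lim (xs us : nat -> H) xb ub m :
  xs @ \oo --> xb -> us @ \oo --> ub ->
  (forall n, fitz_le (xs n) (us n) (m + n.+1%:R^-1)) -> fitz_le xb ub m.
Proof.
move=> xs_xb us_ub xus y v Ayv.
apply: (@cvg_le_natSinv _ (fun n => fitz y v (xs n) (us n)) _ _ _
  (fun n => xus n y v Ayv)).
have half_sqr (w : nat -> H) wb : w @ \oo --> wb ->
    2^-1 * `|w n| ^+ 2 @[n --> \oo] --> 2^-1 * `|wb| ^+ 2.
  move=> w_wb; rewrite expr2; under eq_fun do rewrite expr2.
  by apply: cvgM; [exact: cvg_cst | apply: cvgM; apply: cvg_norm].
apply: cvgB; [apply: cvgB; [apply: cvgB|]|]; try exact: cvg_cst.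
apply: cvgD; apply: half_sqr; apply: cvgD => //; exact: cvg_cst.
Qed.

Local Notation fitz_lb m := (forall x u r, fitz_le x u r -> m <= r).

Lemma fitz_lb_dist m e1 e2 x1 u1 x2 u2 : fitz_lb m ->
  fitz_le x1 u1 (m + e1) -> fitz_le x2 u2 (m + e2) ->
  `|x1 - x2| ^+ 2 + `|u1 - u2| ^+ 2 <= 4 * (e1 + e2).
Proof.
move=> m_lb xu1 xu2.
have half : 0 <= (2^-1 : R) <= 1.
  by rewrite invr_ge0 ler0n invf_le1 ?ler1n ?ltr0n.
have := m_lb _ _ _ (fitz_le_convex half xu1 xu2).
have -> : 1 - 2^-1 = 2^-1 :> R by lra.
have -> : 2^-1 * (2^-1 * 2^-1) = 8^-1 :> R.
  by rewrite -!invfM -!natrM.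
by lra.
Qed.

Lemma fitz_lb_gap m xb ub x u : fitz_lb m -> fitz_le xb ub m -> A x u ->
  m <= ip x u + 2^-1 * `|x| ^+ 2 + 2^-1 * `|u| ^+ 2
       - 2^-1 * (`|xb - x| ^+ 2 + `|ub - u| ^+ 2).
Proof.
move=> m_lb xub Axu; set g := ip x u + _ + _; set D := `|xb - x| ^+ 2 + _.
have D_ge0 : 0 <= D by rewrite addr_ge0 ?sqr_ge0.
have gap t : 0 < t <= 1 -> m <= g - 2^-1 * D + 2^-1 * (t * D).
  move=> /andP[t_gt0 t_le1]; have t01 : 0 <= t <= 1 by rewrite ltW.
  have := m_lb _ _ _ (fitz_le_convex t01 xub (fitz_le_graph Axu)).
  rewrite -/g -/D => le_conv; rewrite -(ler_pM2l t_gt0).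
  have -> : t * (g - 2^-1 * D + 2^-1 * (t * D))
          = t * g - 2^-1 * (t * (1 - t)) * D by ring.
  by lra.
apply/ler_addgt0Pr => e e_gt0; have eD_gt0 : 0 < e + D by lra.
pose t := e / (e + D).
have tE : t * (e + D) = e by rewrite mulfVK ?gt_eqF.
have t01 : 0 < t <= 1.
  by rewrite divr_gt0 //= ler_pdivrMr // mul1r lerDl.
by have := gap t t01; nra.
Qed.

Lemma fitz_lb_variational m xb ub x u : fitz_lb m -> fitz_le xb ub m -> A x u ->
  `|xb + ub| ^+ 2 <= ip (x + ub) (u + xb).
Proof.
move=> m_lb xub Axu; have := fitz_lb_gap m_lb xub Axu.
have := fitz_le_ge xub.
rewrite !(normB2 ipP) (normD2 ipP) !(ipDl ipP) !(ipDr ipP).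
by rewrite (ipC ipP x xb) (ipC ipP ub xb); lra.
Qed.

Lemma maximal_monotone_shift_scale z (g : R) : 0 < g ->
  maximal_monotone ip (fun y w => A (y + z) (g^-1 *: w)).
Proof.
move=> g_gt0; have gV : g * g^-1 = 1 by rewrite mulfV ?gt_eqF.
have ipZ_ge0 a w1 w2 : 0 < a -> (0 <= ip w1 (a *: w2)) = (0 <= ip w1 w2).
  by move=> a_gt0; rewrite (ipZr ipP) pmulr_rge0.
case: maxA => monA maxA'; split.
  move=> y1 y2 w1 w2 /monA A12 /A12.
  by rewrite [y2 + z]addrC addrKA -scalerBr ipZ_ge0 // invr_gt0.
move=> C monC AC y w Cyw.
pose C' y' u := C (y' - z) (g *: u).
have monC' : monotone_op ip C'.
  move=> y1 y2 u1 u2 /monC C12 /C12.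
  by rewrite [y2 - z]addrC addrKA -scalerBr ipZ_ge0.
have AC' y' u : A y' u -> C' y' u.
  by move=> Ayu; apply: AC; rewrite subrK scalerA mulVf ?gt_eqF // scale1r.
by apply: (maxA' C' monC' AC'); rewrite /C' addrK scalerA gV scale1r.
Qed.

Hypothesis graph_neq0 : exists y v, A y v.

Lemma fitz_lb_attained : exists xb ub m, fitz_lb m /\ fitz_le xb ub m.
Proof.
pose S := [set r | exists x u, fitz_le x u r].
have S_inf : has_inf S.
  split; last by exists 0 => r [x [u /fitz_le_ge0]]; apply.
  have [y [v Ayv]] := graph_neq0.
  by eexists; exists y, v; apply: fitz_le_graph Ayv.
have m_lb : fitz_lb (inf S).
  by move=> x u r xur; apply: (ge_inf (proj2 S_inf)); exists x, u.
have near_inf n : exists xu : H * H, fitz_le xu.1 xu.2 (inf S + n.+1%:R^-1).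
  have n_gt0 : 0 < n.+1%:R^-1 :> R by rewrite invr_gt0 ltr0Sn.
  have [r [x [u xur]] r_lt] := inf_adherent n_gt0 S_inf.
  by exists (x, u); apply: fitz_le_trans xur (ltW r_lt).
have [xu xu_inf] := choice near_inf.
have dist n k := fitz_lb_dist m_lb (xu_inf n) (xu_inf k).
have /cvg_ex[xb xs_xb] : cvg ((fun n => (xu n).1) @ \oo).
  apply: (@cvg_of_sqr_dist_le _ _ _ 4) => // n k /=.
  by apply: le_trans (dist n k); rewrite lerDl sqr_ge0.
have /cvg_ex[ub us_ub] : cvg ((fun n => (xu n).2) @ \oo).
  apply: (@cvg_of_sqr_dist_le _ _ _ 4) => // n k /=.
  by apply: le_trans (dist n k); rewrite lerDr sqr_ge0.
by exists xb, ub, (inf S); split => //; apply: fitz_le_lim xs_xb us_ub xu_inf.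
Qed.

Lemma minty_zero : exists y, A y (- y).
Proof.
have [xb [ub [m [m_lb xub]]]] := fitz_lb_attained.
have var := fitz_lb_variational m_lb xub.
have A_ub : A (- ub) (- xb).
  apply: maximal_monotone_mem => y v Ayv.
  rewrite -!opprD (ipNl ipP) (ipNr ipP) opprK (addrC ub) (addrC xb).
  exact: le_trans (sqr_ge0 _) (var y v Ayv).
have := var _ _ A_ub; rewrite !addNr (ip0l ipP) => sqr_le0.
have ubE : ub = - xb.
  apply/eqP; rewrite -addr_eq0 addrC; apply/eqP/normr0_eq0/eqP.
  by rewrite -sqrf_eq0 eq_le sqr_le0 sqr_ge0.
by exists (- ub); rewrite opprK {2}ubE.
Qed.

End Fitzpatrick.

Section Resolvent.
Variables (R : realType) (H : completeNormedModType R) (ip : H -> H -> R).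
Variable A : H -> set H.
Hypotheses (ipP : is_inner_product ip) (maxA : maximal_monotone ip A).
Implicit Types (x y z u : H) (g : R).

Lemma resolvent_graph g z : 0 < g -> (exists y u, A y u) ->
  A (resolvent A g z) (g^-1 *: (z - resolvent A g z)).
Proof.
move=> g_gt0 [y0 [u0 Ayu0]].
have [y Ay] : exists y, A (y + z) (g^-1 *: - y).
  apply: (minty_zero ipP (maximal_monotone_shift_scale ipP maxA z g_gt0)).
  by exists (y0 - z), (g *: u0); rewrite subrK scalerA mulVf ?gt_eqF // scale1r.
have : exists y, exists2 u, A y u & z = y + g *: u.
  exists (y + z), (g^-1 *: - y) => //.
  by rewrite scalerA mulfV ?gt_eqF // scale1r addrC addKr.
move=> /(xgetPex z); set J := resolvent A g z => -[u AJu zE].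
by rewrite {1}zE addrC addKr scalerA mulVf ?gt_eqF // scale1r.
Qed.

Lemma norm_resolvent_sub_le g y u : 0 < g -> A y u ->
  `|y - resolvent A g y| <= g * `|u|.
Proof.
move=> g_gt0 Ayu; set J := resolvent A g y.
set w := g^-1 *: (y - J).
have yJE : y - J = g *: w by rewrite scalerA mulfV ?gt_eqF // scale1r.
have AJw : A J w by apply: resolvent_graph; last by exists y, u.
have : 0 <= ip (y - J) (u - w) := proj1 maxA _ _ _ _ Ayu AJw.
rewrite yJE (ipZl ipP) pmulr_rge0 // (ipBr ipP) (ip_norm ipP) subr_ge0 => w_le.
have : `|w| ^+ 2 <= `|u| ^+ 2 by have := ip_le_norm2 ipP w u; lra.
rewrite ler_sqr ?nnegrE // => /(ler_wpM2l (ltW g_gt0)) gw_le.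
by rewrite normrZ gtr0_norm.
Qed.

Lemma resolvent_firm g z p : 0 < g -> A p 0 ->
  `|z - resolvent A g z| ^+ 2 + `|resolvent A g z - p| ^+ 2 <= `|z - p| ^+ 2.
Proof.
move=> g_gt0 Ap; set J := resolvent A g z.
set w := g^-1 *: (z - J).
have zJE : z - J = g *: w by rewrite scalerA mulfV ?gt_eqF // scale1r.
have AJw : A J w by apply: resolvent_graph; last by exists p, 0.
have zpE : z - p = (J - p) + g *: w by rewrite -zJE [RHS]addrC addrA subrK.
have Jpw_ge0 : 0 <= ip (J - p) (w - 0) := proj1 maxA _ _ _ _ AJw Ap.
rewrite subr0 in Jpw_ge0.
rewrite zJE zpE (normD2 ipP (J - p)) (ipZr ipP) normrZ gtr0_norm // exprMn.
by have := mulr_ge0 (ltW g_gt0) Jpw_ge0; lra.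
Qed.

Lemma norm_resolvent_sub_le_dist g z p : 0 < g -> A p 0 ->
  `|z - resolvent A g z| <= `|z - p|.
Proof.
move=> g_gt0 Ap; rewrite -ler_sqr ?nnegrE //.
have := resolvent_firm z g_gt0 Ap; have := sqr_ge0 `|resolvent A g z - p|.
by lra.
Qed.

End Resolvent.

Definition prox_velocity (R : realType) (H : normedModType R)
  (gamma : nat -> R) (x : nat -> H) n := (gamma n)^-1 *: (x n - x n.+1).

Section ProximalPoint.
Variables (R : realType) (H : completeNormedModType R) (ip : H -> H -> R).
Variables (A : H -> set H) (gamma : nat -> R) (x : nat -> H) (p : H).
Hypotheses (ipP : is_inner_product ip) (maxA : maximal_monotone ip A).
Hypotheses (gamma_gt0 : forall n, 0 < gamma n)
  (xS : forall n, x n.+1 = resolvent A (gamma n) (x n)) (Ap : A p 0).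

Local Notation u := (prox_velocity gamma x).

Lemma prox_step n : x n - x n.+1 = gamma n *: u n.
Proof. by rewrite scalerA mulfV ?gt_eqF // scale1r. Qed.

Lemma prox_graph n : A (x n.+1) (u n).
Proof.
rewrite /prox_velocity xS; apply: (resolvent_graph ipP maxA _ (gamma_gt0 n)).
by exists p, 0.
Qed.

Lemma prox_residual_le n g : 0 < g ->
  `|x n.+1 - resolvent A g (x n.+1)| <= g * `|u n|.
Proof.
by move=> g_gt0; apply: (norm_resolvent_sub_le ipP maxA g_gt0 (prox_graph n)).
Qed.

Lemma norm_prox_velocity_nonincr n : `|u n.+1| <= `|u n|.
Proof.
have := prox_residual_le n (gamma_gt0 n.+1).
by rewrite -xS prox_step normrZ gtr0_norm // ler_pM2l.
Qed.

Lemma norm_prox_velocity_le m n : (m <= n)%N -> `|u n| <= `|u m|.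
Proof.
move=> /subnK <-; elim: (n - m)%N => [|d IHd]; first by rewrite add0n.
by rewrite addSn; apply: le_trans (norm_prox_velocity_nonincr _) IHd.
Qed.

Lemma prox_fejer n :
  `|x n - x n.+1| ^+ 2 + `|x n.+1 - p| ^+ 2 <= `|x n - p| ^+ 2.
Proof. by rewrite xS; apply: (resolvent_firm ipP maxA _ (gamma_gt0 n) Ap). Qed.

Lemma prox_velocity_sum T :
  `|u T| ^+ 2 * \sum_(0 <= n < T.+1) gamma n ^+ 2 <= `|x 0%N - p| ^+ 2.
Proof.
have telescope N : \sum_(0 <= n < N) `|x n - x n.+1| ^+ 2 + `|x N - p| ^+ 2
    <= `|x 0%N - p| ^+ 2.
  elim: N => [|N IHN]; first by rewrite big_geq // add0r.
  by rewrite big_nat_recr //=; have := prox_fejer N; lra.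
apply: le_trans (telescope T.+1); rewrite mulr_sumr -[X in X <= _]addr0.
apply: lerD; last exact: sqr_ge0.
apply: ler_sum_nat => n /andP[_ nT].
rewrite prox_step (normrZ (gamma n)) gtr0_norm // exprMn mulrC.
rewrite ler_wpM2l ?sqr_ge0 //.
by rewrite ler_sqr ?nnegrE //; apply: norm_prox_velocity_le.
Qed.

Lemma prox_residual_sum T g : 0 < g ->
  `|x T.+1 - resolvent A g (x T.+1)| ^+ 2 * \sum_(0 <= n < T.+1) gamma n ^+ 2
    <= g ^+ 2 * `|x 0%N - p| ^+ 2.
Proof.
move=> g_gt0; have S_ge0 : 0 <= \sum_(0 <= n < T.+1) gamma n ^+ 2.
  by rewrite sumr_ge0 // => n _; apply: sqr_ge0.
apply: le_trans (ler_wpM2l (sqr_ge0 g) (prox_velocity_sum T)).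
rewrite mulrA -exprMn ler_wpM2r // ler_sqr ?nnegrE ?mulr_ge0 ?(ltW g_gt0) //.
exact: prox_residual_le.
Qed.

End ProximalPoint.

Lemma mk_ge0 (R : realType) (gamma : nat -> R) k : 0 <= mk gamma k.
Proof.
by rewrite /mk; elim/big_rec: _ => // i r _ r_ge0; rewrite le_max r_ge0 orbT.
Qed.

Lemma mk_ge (R : realType) (gamma : nat -> R) k i : (i <= k)%N -> gamma i <= mk gamma k.
Proof. by move=> ik; apply: le_bigmax_seq; rewrite ?mem_index_iota. Qed.

Lemma ceiln_ge (R : realType) (r : R) : 0 <= r -> r <= (ceiln r)%:R.
Proof.
move=> r_ge0; rewrite /ceiln natr_absz ger0_norm ?ceil_ge //.
by rewrite ceil_ge0; lra.
Qed.

Lemma Mk_ge (R : realType) (gamma : nat -> R) k :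
  k.+1%:R * (2 + mk gamma k) <= (Mk gamma k).+1%:R.
Proof.
have k1_ge1 : 1 <= k.+1%:R :> R by rewrite ler1n.
have two_le : 2 <= k.+1%:R * (2 + mk gamma k).
  by have := mk_ge0 gamma k; nra.
have /ceiln_ge ceil_ge : 0 <= k.+1%:R * (2 + mk gamma k) by apply: le_trans two_le.
rewrite /Mk subn1 prednK // -(ltr_nat R); apply: lt_le_trans ceil_ge; lra.
Qed.

Lemma Phi_ge (R : realType) (gamma : nat -> R) theta b k :
  (forall n, 0 < gamma n) -> rate_of_divergence gamma theta -> 1 < b * k.+1%:R ->
  ((theta (ceiln (b ^+ 2 * (Mk gamma k).+1%:R ^+ 2))).+1 <= Phi gamma theta b k)%N.
Proof.
move=> gamma_gt0 rate bk_gt1; rewrite /Phi.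
set m := mk gamma k; set q := (Mk gamma k).+1%:R; set c := ceiln _.
have m_ge0 : 0 <= m := mk_ge0 gamma k.
have mq : k.+1%:R * (2 + m) <= q := Mk_ge gamma k.
have b_gt0 : 0 < b.
  by move: bk_gt1; rewrite -(pmulr_lgt0 _ (ltr0Sn R k)) => /(lt_trans ltr01).
have bq : 2 + m < b * q.
  by have := ler_wpM2l (ltW b_gt0) mq; nra.
have c_gt : (2 + m) ^+ 2 < c%:R.
  apply: lt_le_trans (ceiln_ge _); last by rewrite mulr_ge0 ?sqr_ge0.
  by rewrite -exprMn ltr_sqr ?nnegrE; nra.
have theta_gt0 : (0 < theta c)%N.
  rewrite lt0n; apply/eqP => theta0; have := rate c; rewrite theta0 big_nat1.
  have g0m : gamma 0%N <= m := mk_ge gamma (leq0n k).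
  have : gamma 0%N ^+ 2 <= m ^+ 2 by rewrite ler_sqr ?nnegrE // ltW.
  by nra.
have c_gt4 : (4 < c)%N by rewrite -(ltr_nat R); nra.
by nia.
Qed.

Lemma residual_mem_AF (R : realType) (V : normedModType R) (A : V -> set V)
    (gamma : nat -> R) k y :
  (forall i, (i <= k)%N ->
     `|y - resolvent A (gamma i) y| * (Mk gamma k).+1%:R <= gamma i) ->
  y \in AF A gamma k.
Proof.
move=> res_le; rewrite inE => i ik.
have m2_gt0 : 0 < 2 + mk gamma k by have := mk_ge0 gamma k; lra.
rewrite -div1r ler_pdivlMr ?ltr0Sn // -(ler_pM2r m2_gt0) mul1r -mulrA.
apply: le_trans (ler_wpM2l (normr_ge0 _) (Mk_ge gamma k)) _.
by apply: le_trans (res_le i ik) _; have := mk_ge gamma ik; lra.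
Qed.

Lemma mul_le_of_sqr_mul_le (R : realFieldType) (d q g b s : R) :
  0 < b -> 0 <= d -> 0 <= q -> 0 <= g ->
  b ^+ 2 * q ^+ 2 <= s -> d ^+ 2 * s <= g ^+ 2 * b ^+ 2 -> d * q <= g.
Proof.
move=> b_gt0 d_ge0 q_ge0 g_ge0 bqs dsg.
rewrite -ler_sqr ?nnegrE ?mulr_ge0 // -(ler_pM2r (exprn_gt0 2 b_gt0)).
apply: le_trans dsg.
have -> : (d * q) ^+ 2 * b ^+ 2 = d ^+ 2 * (b ^+ 2 * q ^+ 2) by ring.
by rewrite ler_wpM2l ?sqr_ge0.
Qed.

Unset Implicit Arguments.

Theorem theorem8p4 (R : realType) (H : completeNormedModType R)
  (ip : H -> H -> R) (A : H -> set H) (gamma : nat -> R)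
  (theta : nat -> nat) (x : nat -> H) (b : R) :
  is_inner_product ip ->
  maximal_monotone ip A ->
  zer A !=set0 ->
  (forall n, 0 < gamma n) ->
  (\sum_(0 <= i < n) gamma i ^+ 2) @[n --> \oo] --> +oo ->
  rate_of_divergence gamma theta ->
  (forall n, x n.+1 = resolvent A (gamma n) (x n)) ->
  0 < b ->
  (exists2 p, p \in zer A & `|x 0%N - p| <= b) ->
  forall k : nat, exists N : nat,
    (N <= Phi gamma theta b k)%N /\ x N \in AF A gamma k.
Proof.
move=> ipP maxA _ gamma_gt0 _ rate xS b_gt0 [p p_zer x0p] k.
have Ap : A p 0 by rewrite inE in p_zer.
have [bk_le1 | bk_gt1] := leP (b * k.+1%:R) 1.
  exists 0%N; split => //; rewrite inE => i _.
  apply: le_trans (norm_resolvent_sub_le_dist ipP maxA _ (gamma_gt0 i) Ap) _.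
  by apply: le_trans x0p _; rewrite -div1r ler_pdivlMr.
set q := (Mk gamma k).+1%:R : R; set c := ceiln (b ^+ 2 * q ^+ 2).
exists (theta c).+1; split; first exact: Phi_ge.
apply: residual_mem_AF => i _.
have residual := prox_residual_sum ipP maxA gamma_gt0 xS Ap (theta c) (gamma_gt0 i).
apply: (mul_le_of_sqr_mul_le b_gt0 _ _ (ltW (gamma_gt0 i)) _
  (le_trans residual _)) => //.
- by apply: le_trans (rate c); apply: ceiln_ge; rewrite mulr_ge0 ?sqr_ge0.
- by rewrite ler_wpM2l ?sqr_ge0 // ler_sqr ?nnegrE // ltW.
Qed.
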